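(* For all runtime type environments $\Delta_1,\Delta_2$: if $\mathsf{safe}(\Delta_1)$, $\mathsf{safe}(\Delta_2)$, $\mathrm{snames}(\Delta_1)\cap\mathrm{snames}(\Delta_2)=\emptyset$, and the disjoint union $\Delta_1,\Delta_2$ is defined, then $\mathsf{safe}(\Delta_1,\Delta_2)$.
   Context: Session types: $S ::= \oplus\mathtt{p}\{\ell_i(A_i).S_i\}_{i\in I} \mid \&\mathtt{p}\{\ell_i(A_i).S_i\}_{i\in I} \mid \mu X.S \mid X \mid \mathsf{end}$, where $\mathtt{p},\mathtt{q}$ range over roles, $\ell$ over message labels and $A$ over payload types (compared by syntactic equality). Recursive session types are treated equi-recursively. Queue types are $Q ::= \epsilon \mid (\mathtt{p}\to\mathtt{q} : \ell(A))\cdot Q$, identified up to the congruence $\equiv$ that swaps two adjacent entries $(\mathtt{p}_1\to\mathtt{q}_1:\ell_1(A_1))$ and $(\mathtt{p}_2\to\mathtt{q}_2:\ell_2(A_2))$ whenever $\mathtt{p}_1\neq\mathtt{p}_2$ or $\mathtt{q}_1\neq\mathtt{q}_2$. A runtime type environment $\Delta$ is a finite collection of entries of the forms: actor name $a$; access point name $p$; polarised initialisation token $\iota^{+}:S$ or $\iota^{-}:S$; session endpoint $s[\mathtt{p}]:S$; session queue $s:Q$; each entry's subject occurs at most once, and $\Delta_1,\Delta_2$ denotes disjoint union (defined only when the subjects are disjoint). The congruence $\equiv$ on queue types extends to environments. Labelled transitions on environments ($j\in I$ where applicable): (Send) $\Delta, s[\mathtt{p}]:\oplus\mathtt{q}\{\ell_i(A_i).S_i\}_{i\in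 I}, s:Q \to \Delta, s[\mathtt{p}]:S_j, s:Q\cdot(\mathtt{p}\to\mathtt{q}:\ell_j(A_j))$; (Recv) $\Delta, s[\mathtt{p}]:\&\mathtt{q}\{\ell_i(A_i).S_i\}_{i\in I}, s:(\mathtt{q}\to\mathtt{p}:\ell_j(A_j))\cdot Q \to \Delta, s[\mathtt{p}]:S_j, s:Q$; (End) $\Delta, s[\mathtt{p}]:\mathsf{end} \to \Delta$; (Rec) $\Delta, s[\mathtt{p}]:\mu X.S \to \Delta'$ whenever $\Delta, s[\mathtt{p}]:S\{\mu X.S/X\}\to\Delta'$. Write $\Delta \Longrightarrow \Delta'$ if $\Delta\equiv\Delta_a\to\Delta_b\equiv\Delta'$ for some $\Delta_a,\Delta_b$. The predicate $\mathsf{safe}$ is the largest predicate on environments such that $\mathsf{safe}(\Delta)$ implies: (i) if $\Delta=\Delta_0, s[\mathtt{p}]:\&\mathtt{q}\{\ell_i(A_i).S_i\}_{i\in I}, s:Q$ with $Q\equiv(\mathtt{q}\to\mathtt{p}:\ell_j(B_j))\cdot Q'$, then $j\in I$ and $B_j=A_j$; (ii) if $\Delta=\Delta_0, s[\mathtt{p}]:\mu X.S$ then $\mathsf{safe}(\Delta_0, s[\mathtt{p}]:S\{\mu X.S/X\})$; (iii) if $\Delta\Longrightarrow\Delta'$ then $\mathsf{safe}(\Delta')$. The set of session names of an environment is $\mathrm{snames}(\Delta)=\{s \mid s:Q\in\Delta \text{ for some } Q, \text{ or } s[\mathtt{p}]\in\mathrm{dom}(\Delta)\text{ for some role }\mathtt{p}\}$.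 *)

From Stdlib Require Import List Permutation Relations.
Import ListNotations.

Set Implicit Arguments.

Section Env.

(* Roles, message labels and payload types are abstract; payload types are
   compared by syntactic (Leibniz) equality. *)
Context (Role Label Payload : Type).

(* Session types, recursion variables in de Bruijn notation:
   [SVar n] refers to the n-th enclosing [SRec]. A branch list
   [bs : list (Label * Payload * stype)] represents {l_i(A_i).S_i}_{i in I}. *)
Inductive stype : Type :=
| SSel (q : Role) (bs : list (Label * Payload * stype))
| SBra (q : Role) (bs : list (Label * Payload * stype))
| SRec (S : stype)
| SVar (n : nat)
| SEnd.

Fixpoint lift (c : nat) (T : stype) : stype :=
  match T with
  | SSel q bs => SSel q (map (fun b => match b with (l, a, U) => (l, a, lift c U) end) bs)
  | SBra q bs => SBra q (map (fun b => match b with (l, a, U) => (l, a, lift c U) end) bs)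
  | SRec U => SRec (lift (S c) U)
  | SVar n => if Nat.ltb n c then SVar n else SVar (S n)
  | SEnd => SEnd
  end.

(* [subst k V T] : T{V/k}, removing the binder index k. *)
Fixpoint subst (k : nat) (V : stype) (T : stype) : stype :=
  match T with
  | SSel q bs => SSel q (map (fun b => match b with (l, a, U) => (l, a, subst k V U) end) bs)
  | SBra q bs => SBra q (map (fun b => match b with (l, a, U) => (l, a, subst k V U) end) bs)
  | SRec U => SRec (subst (S k) (lift 0 V) U)
  | SVar n => if Nat.eqb n k then V
              else if Nat.ltb n k then SVar n else SVar (pred n)
  | SEnd => SEnd
  end.

Definition unfold (T : stype) : stype := subst 0 (SRec T) T.

(* A queue entry (p -> q : l(A)) is (p, q, l, A). *)
Definition msg : Type := (Role * Role * Label * Payload)%type.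
Definition queue : Type := list msg.

Definition msg_from (m : msg) : Role := match m with (p, _, _, _) => p end.
Definition msg_to (m : msg) : Role := match m with (_, q, _, _) => q end.

Inductive qswap : queue -> queue -> Prop :=
| qswap_intro (Q1 Q2 : queue) (m1 m2 : msg) :
    msg_from m1 <> msg_from m2 \/ msg_to m1 <> msg_to m2 ->
    qswap (Q1 ++ m1 :: m2 :: Q2) (Q1 ++ m2 :: m1 :: Q2).

Definition qequiv : queue -> queue -> Prop := clos_refl_sym_trans queue qswap.

Inductive entry : Type :=
| EActor (a : nat)
| EAccess (p : nat)
| EToken (i : nat) (pos : bool) (T : stype)     (* iota^+ : S (pos = true), iota^- : S *)
| EEndp (s : nat) (p : Role) (T : stype)
| EQueue (s : nat) (Q : queue).

Inductive subject : Type :=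
| SubActor (a : nat)
| SubAccess (p : nat)
| SubToken (i : nat) (pos : bool)
| SubEndp (s : nat) (p : Role)
| SubQueue (s : nat).

Definition subj (e : entry) : subject :=
  match e with
  | EActor a => SubActor a
  | EAccess p => SubAccess p
  | EToken i b _ => SubToken i b
  | EEndp s p _ => SubEndp s p
  | EQueue s _ => SubQueue s
  end.

(* A runtime type environment: a finite collection of entries, represented
   by a list considered up to permutation. *)
Definition env : Type := list entry.

Definition env_wf (D : env) : Prop := NoDup (map subj D).

Definition env_union_defined (D1 D2 : env) : Prop := env_wf (D1 ++ D2).

Inductive entry_equiv : entry -> entry -> Prop :=
| ee_refl e : entry_equiv e e
| ee_queue s Q Q' : qequiv Q Q' -> entry_equiv (EQueue s Q) (EQueue s Q').

Definition env_equiv (D D' : env) : Prop :=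
  exists D'', Permutation D D'' /\ Forall2 entry_equiv D'' D'.

(* Labelled transitions (labels omitted, they play no role in safety). *)
Inductive env_step : env -> env -> Prop :=
| st_send D D' D0 s p q bs Q l A T :
    Permutation D (D0 ++ [EEndp s p (SSel q bs); EQueue s Q]) ->
    In (l, A, T) bs ->
    Permutation D' (D0 ++ [EEndp s p T; EQueue s (Q ++ [(p, q, l, A)])]) ->
    env_step D D'
| st_recv D D' D0 s p q bs Q l A T :
    Permutation D (D0 ++ [EEndp s p (SBra q bs); EQueue s ((q, p, l, A) :: Q)]) ->
    In (l, A, T) bs ->
    Permutation D' (D0 ++ [EEndp s p T; EQueue s Q]) ->
    env_step D D'
| st_end D D' D0 s p :
    Permutation D (D0 ++ [EEndp s p SEnd]) ->
    Permutation D' D0 ->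
    env_step D D'
| st_rec D D' D0 s p T :
    Permutation D (D0 ++ [EEndp s p (SRec T)]) ->
    env_step (D0 ++ [EEndp s p (unfold T)]) D' ->
    env_step D D'.

Definition env_step_cong (D D' : env) : Prop :=
  exists Da Db, env_equiv D Da /\ env_step Da Db /\ env_equiv Db D'.

Definition safety_prop (P : env -> Prop) : Prop :=
  forall D, P D ->
    (forall D0 s p q bs Q l B Q',
        Permutation D (D0 ++ [EEndp s p (SBra q bs); EQueue s Q]) ->
        qequiv Q ((q, p, l, B) :: Q') ->
        exists T, In (l, B, T) bs)
    /\ (forall D0 s p T,
        Permutation D (D0 ++ [EEndp s p (SRec T)]) ->
        P (D0 ++ [EEndp s p (unfold T)]))
    /\ (forall D', env_step_cong D D' -> P D').

(* safe is the largest safety property. *)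
Definition safe (D : env) : Prop :=
  exists P, safety_prop P /\ P D.

Definition in_snames (s : nat) (D : env) : Prop :=
  exists e, In e D /\
    match e with
    | EQueue s' _ => s' = s
    | EEndp s' _ _ => s' = s
    | _ => False
    end.

End Env.

From Stdlib Require Import List Permutation Relations.
Import ListNotations.
Set Implicit Arguments.

(* Call an environment split-safe when, up to permutation, it is the union of
   two safe environments with disjoint session names. Split-safe environments
   form a safety property, hence are safe. A reduction, an unfolding, or a
   type-checking obligation of clause (i) involves only entries of a single
   session s (an endpoint and possibly the queue of s); by disjointness these
   all lie in one component, which makes the move on its own and stays safe,
   while the other component is untouched. Since safety is invariant under
   the queue congruence, so is being split-safe. *)

Lemma Permutation_app_app_inv (A : Type) (l1 l2 l3 l4 : list A) :
  Permutation (l1 ++ l2) (l3 ++ l4) ->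
  exists a b c d, Permutation l1 (a ++ c) /\ Permutation l2 (b ++ d) /\
    Permutation l3 (a ++ b) /\ Permutation l4 (c ++ d).
Proof.
  revert l1 l2 l3; induction l4 as [|x l4 IH]; intros l1 l2 l3 H.
  - exists l1, l2, [], []. rewrite !app_nil_r in *.
    split; [|split; [|split]]; auto. now symmetry.
  - assert (Hx : In x (l1 ++ l2)) by (apply (Permutation_in _ (Permutation_sym H)), in_elt).
    apply in_app_or in Hx as [Hx|Hx]; apply in_split in Hx as (u & v & ->).
    + rewrite <- app_assoc in H; apply Permutation_app_inv in H; rewrite app_assoc in H.
      destruct (IH _ _ _ H) as (a & b & c & d & H1 & H2 & H3 & H4).
      exists a, b, (x :: c), d. split; [|split; [|split]]; auto.
      * rewrite <- Permutation_middle, <- Permutation_middle. now apply perm_skip.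
      * now apply perm_skip.
    + rewrite app_assoc in H; apply Permutation_app_inv in H; rewrite <- app_assoc in H.
      destruct (IH _ _ _ H) as (a & b & c & d & H1 & H2 & H3 & H4).
      exists a, b, c, (x :: d). split; [|split; [|split]]; auto.
      * rewrite <- Permutation_middle, <- Permutation_middle. now apply perm_skip.
      * rewrite <- Permutation_middle. now apply perm_skip.
Qed.

Lemma Forall2_Permutation_r (A B : Type) (R : A -> B -> Prop) l1 l2 l2' :
  Forall2 R l1 l2 -> Permutation l2 l2' ->
  exists l1', Permutation l1 l1' /\ Forall2 R l1' l2'.
Proof.
  intros H P. destruct (Permutation_Forall2 P (Forall2_flip H)) as (l1' & P1 & H1).
  exists l1'. split; [exact P1|exact (Forall2_flip H1)].
Qed.

Lemma Forall2_trans (A : Type) (R : A -> A -> Prop) l1 l2 l3 :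
  (forall x y z, R x y -> R y z -> R x z) ->
  Forall2 R l1 l2 -> Forall2 R l2 l3 -> Forall2 R l1 l3.
Proof.
  intros HR H12; revert l3; induction H12; intros l3 H23; inversion H23; subst; eauto.
Qed.

Section SafeUnion.

Context (Role Label Payload : Type).

Local Notation env := (env Role Label Payload).
Local Notation entry := (entry Role Label Payload).
Local Notation entry_equiv := (@entry_equiv Role Label Payload).

Lemma entry_equiv_trans (e1 e2 e3 : entry) :
  entry_equiv e1 e2 -> entry_equiv e2 e3 -> entry_equiv e1 e3.
Proof.
  destruct 1 as [|s Q Q' HQ]; intros H23; [exact H23|].
  inversion H23; subst; constructor; [exact HQ|apply rst_trans with Q'; assumption].
Qed.

Lemma entry_equiv_endp_r (e : entry) s p T :
  entry_equiv e (EEndp s p T) -> e = EEndp s p T.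
Proof. now inversion 1. Qed.

Lemma entry_equiv_queue_r (e : entry) s Q :
  entry_equiv e (EQueue s Q) -> exists Q', e = EQueue s Q' /\ qequiv Q' Q.
Proof. inversion 1; subst; eexists; split; eauto; apply rst_refl. Qed.

Lemma Permutation_env_equiv (D D' : env) : Permutation D D' -> env_equiv D D'.
Proof.
  intros P. exists D'. split; [exact P|].
  clear P; induction D' as [|e D' IH]; [constructor|constructor; [constructor|exact IH]].
Qed.

Lemma Forall2_env_equiv (D D' : env) : Forall2 entry_equiv D D' -> env_equiv D D'.
Proof. intros H. exists D. split; [reflexivity|exact H]. Qed.

Lemma env_equiv_trans (D1 D2 D3 : env) :
  env_equiv D1 D2 -> env_equiv D2 D3 -> env_equiv D1 D3.
Proof.
  intros (X & P1 & H1) (Y & P2 & H2).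
  destruct (Forall2_Permutation_r H1 P2) as (X' & PX & HX).
  exists X'. split; [now rewrite P1|exact (Forall2_trans entry_equiv_trans HX H2)].
Qed.

Lemma env_equiv_app_inv_r (D F0 Z : env) :
  env_equiv D (F0 ++ Z) ->
  exists D0 Z', Permutation D (D0 ++ Z') /\
    Forall2 entry_equiv D0 F0 /\ Forall2 entry_equiv Z' Z.
Proof.
  intros (X & P & H). apply Forall2_app_inv_r in H as (D0 & Z' & H0 & HZ & ->).
  now exists D0, Z'.
Qed.

Lemma safety_prop_safe : safety_prop (@safe Role Label Payload).
Proof.
  intros D (P & HP & HD). destruct (HP D HD) as (Hbra & Hrec & Hstep).
  split; [exact Hbra|split]; intros; exists P; split; eauto.
Qed.

Lemma safe_step (D D' : env) : safe D -> env_step D D' -> safe D'.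
Proof.
  intros HD H. apply (safety_prop_safe HD). exists D, D'.
  split; [|split]; [apply Permutation_env_equiv; reflexivity|exact H|].
  apply Permutation_env_equiv; reflexivity.
Qed.

Lemma safe_env_equiv (D F : env) : safe D -> env_equiv D F -> safe F.
Proof.
  intros HD HF. exists (fun F => exists D, safe D /\ env_equiv D F). split; [|eauto].
  clear. intros F (D & HD & HF). destruct (safety_prop_safe HD) as (Hbra & Hrec & Hstep).
  split; [|split].
  - intros F0 s p q bs Q l B Q' P HQ.
    assert (HZ : env_equiv D (F0 ++ [EEndp s p (SBra q bs); EQueue s Q]))
      by (eapply env_equiv_trans; [exact HF|now apply Permutation_env_equiv]).
    apply env_equiv_app_inv_r in HZ as (D0 & Z' & PD & _ & HZ).
    inversion HZ as [|e1 ? Z1 ? He1 HZ1]; inversion HZ1 as [|e2 ? ? ? He2 HZ2];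
      inversion HZ2; subst.
    apply entry_equiv_endp_r in He1 as ->.
    apply entry_equiv_queue_r in He2 as (Q0 & -> & HQ0).
    eapply Hbra; [exact PD|]. eapply rst_trans; eassumption.
  - intros F0 s p T P.
    assert (HZ : env_equiv D (F0 ++ [EEndp s p (SRec T)]))
      by (eapply env_equiv_trans; [exact HF|now apply Permutation_env_equiv]).
    apply env_equiv_app_inv_r in HZ as (D0 & Z' & PD & H0 & HZ).
    inversion HZ as [|e1 ? ? ? He1 HZ1]; inversion HZ1; subst.
    apply entry_equiv_endp_r in He1 as ->.
    exists (D0 ++ [EEndp s p (unfold T)]). split; [now apply (Hrec D0 s p T)|].
    apply Forall2_env_equiv, Forall2_app; [exact H0|repeat constructor].
  - intros D' (Fa & Fb & Ha & Hab & Hb). exists D'. split.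
    + apply Hstep. exists Fa, Fb. split; [eapply env_equiv_trans; eassumption|auto].
    + apply Permutation_env_equiv; reflexivity.
Qed.

Lemma safe_perm (D F : env) : safe D -> Permutation D F -> safe F.
Proof. intros HD P. exact (safe_env_equiv HD (Permutation_env_equiv P)). Qed.

(* The body of [in_snames]: [in_snames s D] is convertible to
   [exists e, In e D /\ entry_in_session s e]. *)
Definition entry_in_session (s : nat) (e : entry) : Prop :=
  match e with
  | EQueue s' _ => s' = s
  | EEndp s' _ _ => s' = s
  | _ => False
  end.

Definition snames_disjoint (D1 D2 : env) : Prop :=
  forall s, in_snames s D1 -> in_snames s D2 -> False.

Lemma in_snames_app s (D1 D2 : env) :
  in_snames s (D1 ++ D2) <-> in_snames s D1 \/ in_snames s D2.
Proof.
  split.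
  - intros (e & He & Hs). apply in_app_or in He as [He|He]; [left|right]; now exists e.
  - intros [(e & He & Hs)|(e & He & Hs)]; exists e; split; auto; apply in_or_app; auto.
Qed.

Lemma in_snames_perm s (D D' : env) : Permutation D D' -> in_snames s D -> in_snames s D'.
Proof. intros P (e & He & Hs). exists e. split; [exact (Permutation_in e P He)|exact Hs]. Qed.

Lemma in_snames_Forall2_equiv s (D D' : env) :
  Forall2 entry_equiv D D' -> in_snames s D' -> in_snames s D.
Proof.
  induction 1 as [|e e' D D' He _ IH]; intros (f & Hf & Hs); [destruct Hf|].
  destruct Hf as [<-|Hf].
  - exists e. split; [now left|]. now destruct He.
  - destruct IH as (g & Hg & Hgs); [now exists f|]. exists g. split; [now right|exact Hgs].
Qed.

Lemma in_snames_session_incl s (Z Z' : env) :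
  Forall (entry_in_session s) Z' -> in_snames s Z ->
  forall t, in_snames t Z' -> in_snames t Z.
Proof.
  intros HZ' Hs t (e & He & Ht). rewrite Forall_forall in HZ'.
  specialize (HZ' e He). replace t with s; [exact Hs|].
  destruct e; simpl in *; [contradiction|contradiction|contradiction|congruence|congruence].
Qed.

Lemma snames_disjoint_sym (D1 D2 : env) : snames_disjoint D1 D2 -> snames_disjoint D2 D1.
Proof. intros H s H2 H1. exact (H s H1 H2). Qed.

Lemma snames_disjoint_mono (D1 D2 D1' D2' : env) :
  (forall s, in_snames s D1' -> in_snames s D1) ->
  (forall s, in_snames s D2' -> in_snames s D2) ->
  snames_disjoint D1 D2 -> snames_disjoint D1' D2'.
Proof. intros H1 H2 H s Hs1 Hs2. exact (H s (H1 s Hs1) (H2 s Hs2)). Qed.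

Lemma Permutation_app_session_inv s (F1 F2 D0 Z : env) :
  snames_disjoint F1 F2 -> Forall (entry_in_session s) Z ->
  Permutation (F1 ++ F2) (D0 ++ Z) ->
  (exists X, Permutation F1 (X ++ Z) /\ Permutation D0 (X ++ F2)) \/
  (exists X, Permutation F2 (X ++ Z) /\ Permutation D0 (X ++ F1)).
Proof.
  intros Hdisj HZ P.
  destruct (Permutation_app_app_inv _ _ _ _ P) as (a & b & c & d & P1 & P2 & P0 & PZ).
  destruct c as [|z c]; [|destruct d as [|w d]].
  - right. exists b. rewrite P2, P0, P1, PZ, app_nil_r.
    split; [reflexivity|apply Permutation_app_comm].
  - left. exists a. rewrite P1, P2, P0, PZ, !app_nil_r. split; reflexivity.
  - exfalso. rewrite Forall_forall in HZ. apply (Hdisj s).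
    + exists z. split; [rewrite P1; apply in_elt|]. apply HZ. rewrite PZ. now left.
    + exists w. split; [rewrite P2; apply in_elt|]. apply HZ. rewrite PZ. apply in_elt.
Qed.

Definition safe_split (D : env) : Prop :=
  exists D1 D2, safe D1 /\ safe D2 /\ snames_disjoint D1 D2 /\ Permutation D (D1 ++ D2).

Lemma safe_split_perm (D D' : env) : Permutation D D' -> safe_split D -> safe_split D'.
Proof.
  intros P (D1 & D2 & H1 & H2 & Hdisj & PD). exists D1, D2.
  repeat split; auto. now rewrite <- P.
Qed.

Lemma safe_split_env_equiv (D D' : env) : env_equiv D D' -> safe_split D -> safe_split D'.
Proof.
  intros (X & PX & HX) (D1 & D2 & H1 & H2 & Hdisj & PD).
  assert (P : Permutation X (D1 ++ D2)) by now rewrite <- PX.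
  destruct (Permutation_Forall2 P HX) as (Y & PY & HY).
  apply Forall2_app_inv_l in HY as (K1 & K2 & HK1 & HK2 & ->).
  exists K1, K2. split; [|split; [|split]].
  - exact (safe_env_equiv H1 (Forall2_env_equiv HK1)).
  - exact (safe_env_equiv H2 (Forall2_env_equiv HK2)).
  - apply (snames_disjoint_mono (D1 := D1) (D2 := D2)); [intro s|intro s|exact Hdisj];
      apply in_snames_Forall2_equiv; assumption.
  - now symmetry.
Qed.

Lemma safe_split_session_inv s (D0 Z : env) :
  Forall (entry_in_session s) Z -> safe_split (D0 ++ Z) ->
  exists F G X, safe F /\ safe G /\ snames_disjoint F G /\
    Permutation F (X ++ Z) /\ Permutation D0 (X ++ G).
Proof.
  intros HZ (D1 & D2 & H1 & H2 & Hdisj & P).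
  destruct (Permutation_app_session_inv _ Hdisj HZ (Permutation_sym P))
    as [(X & PF & PD)|(X & PF & PD)].
  - now exists D1, D2, X.
  - exists D2, D1, X. repeat split; auto. now apply snames_disjoint_sym.
Qed.

Lemma safe_split_local s (D0 Z Z' : env) :
  Forall (entry_in_session s) Z -> Forall (entry_in_session s) Z' -> in_snames s Z ->
  (forall X, safe (X ++ Z) -> safe (X ++ Z')) ->
  safe_split (D0 ++ Z) -> safe_split (D0 ++ Z').
Proof.
  intros HZ HZ' Hs Hsafe HD.
  destruct (safe_split_session_inv _ HZ HD) as (F & G & X & HF & HG & Hdisj & PF & PD).
  exists (X ++ Z'), G. split; [|split; [|split]].
  - apply Hsafe. exact (safe_perm HF PF).
  - exact HG.
  - apply (snames_disjoint_mono (D1 := F) (D2 := G)); [|auto|exact Hdisj].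
    intros t Ht. apply (in_snames_perm (Permutation_sym PF)), in_snames_app.
    apply in_snames_app in Ht as [Ht|Ht]; [now left|right].
    exact (in_snames_session_incl HZ' Hs Ht).
  - rewrite PD, <- !app_assoc. apply Permutation_app_head, Permutation_app_comm.
Qed.

Lemma safe_split_unfold (D0 : env) s p T :
  safe_split (D0 ++ [EEndp s p (SRec T)]) -> safe_split (D0 ++ [EEndp s p (unfold T)]).
Proof.
  apply (safe_split_local (s := s)); [repeat constructor|repeat constructor| |].
  - exists (EEndp s p (SRec T)). split; [now left|reflexivity].
  - intros X HX. exact (proj1 (proj2 (safety_prop_safe HX)) X s p T (Permutation_refl _)).
Qed.

(* [st_rec] unfolds one endpoint and may then perform a step of any entry,
   possibly in the other component; hence the step is not localised as a
   whole, only the invariant [safe_split] is propagated. *)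
Lemma safe_split_step (D D' : env) : env_step D D' -> safe_split D -> safe_split D'.
Proof.
  assert (Hendp : forall s p T (Z : env), in_snames s (EEndp s p T :: Z))
    by (intros s p T Z; exists (EEndp s p T); split; [left|]; reflexivity).
  induction 1 as [D D' D0 s p q bs Q l A T PD Hl PD'|D D' D0 s p q bs Q l A T PD Hl PD'
                 |D D' D0 s p PD PD'|D D' D0 s p T PD _ IH]; intros HD.
  4: apply IH, safe_split_unfold, (safe_split_perm PD HD).
  all: apply (safe_split_perm PD) in HD; apply (safe_split_perm (Permutation_sym PD')).
  3: rewrite <- (app_nil_r D0).
  all: apply (safe_split_local (s := s)) with (5 := HD); [repeat constructor
    |repeat constructor|apply Hendp|intros X HX; apply (safe_step HX)].
  - eapply st_send; [reflexivity|exact Hl|reflexivity].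
  - eapply st_recv; [reflexivity|exact Hl|reflexivity].
  - eapply st_end; [reflexivity|now rewrite app_nil_r].
Qed.

Lemma safety_prop_safe_split : safety_prop safe_split.
Proof.
  intros D HD. split; [|split].
  - intros D0 s p q bs Q l B Q' P HQ.
    apply (safe_split_perm P), (safe_split_session_inv (s := s)) in HD; [|repeat constructor].
    destruct HD as (F & G & X & HF & _ & _ & PF & _).
    exact (proj1 (safety_prop_safe HF) X s p q bs Q l B Q' PF HQ).
  - intros D0 s p T P. apply safe_split_unfold, (safe_split_perm P HD).
  - intros D' (Da & Db & Ha & Hab & Hb).
    exact (safe_split_env_equiv Hb (safe_split_step Hab (safe_split_env_equiv Ha HD))).
Qed.

End SafeUnion.

Theorem lemmaB9 (Role Label Payload : Type) (D1 D2 : env Role Label Payload) :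
  safe D1 -> safe D2 ->
  (forall s : nat, in_snames s D1 -> in_snames s D2 -> False) ->
  env_wf D1 -> env_wf D2 -> env_union_defined D1 D2 ->
  safe (D1 ++ D2).
Proof.
  intros H1 H2 Hdisj _ _ _. exists (@safe_split Role Label Payload). split.
  - apply safety_prop_safe_split.
  - exists D1, D2. repeat split; auto.
Qed.
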